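(* Let $s\ge1$, $m_1,n_1>0$, $0<N<1$, $1<n_2<m_2$, and let $n(x)=n_1(x+n_2)^N$, $m(x)=m_1(x+m_2)^M$, $a^*(x)=\dfrac{-1+\sqrt{1+4(x+1)^s}}{2(x+1)^s}$. If $M>N+s$ and $$m_2>\Big\{\frac{n_1}{2m_1}(1+\sqrt5)\Big\}^{1/(M-N-s)},$$ then $a^*(x)>\dfrac{n(x)}{m(x)}$ for all $x\ge0$. *)

From Stdlib Require Import Reals.
Open Scope R_scope.

Definition nfun (n1 n2 N x : R) : R := n1 * Rpower (x + n2) N.
Definition mfun (m1 m2 M x : R) : R := m1 * Rpower (x + m2) M.
Definition astar (s x : R) : R :=
  (-1 + sqrt (1 + 4 * Rpower (x + 1) s)) / (2 * Rpower (x + 1) s).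

From Stdlib Require Import Reals Lra.
Open Scope R_scope.

(* Write t = (x+1)^s >= 1.  Rationalising, a*(x) = 2 / (1 + sqrt (1 + 4t)), and
   1 + sqrt (1 + 4t) <= (1 + sqrt 5) t, so a*(x) >= 2 / ((1 + sqrt 5) t).
   On the other side n2 < m2 gives n(x)/m(x) < n1 / (m1 (x+m2)^(M-N)), and
   (x+m2)^(M-N) >= t m2^(M-N-s) > t K with K = n1 (1 + sqrt 5) / (2 m1) by the
   hypothesis on m2; hence n(x)/m(x) < n1 / (m1 t K) = 2 / ((1 + sqrt 5) t). *)

Lemma Rpower_pos (a e : R) : 0 < Rpower a e.
Proof. unfold Rpower; apply exp_pos. Qed.

Lemma Rpower_ge_1 (a e : R) : 1 <= a -> 0 <= e -> 1 <= Rpower a e.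
Proof.
  intros Ha He; rewrite <- (Rpower_O a) at 1 by lra.
  apply Rle_Rpower; lra.
Qed.

Lemma lt_Rpower_of_root (K m e : R) :
  0 < K -> 0 < e -> Rpower K (/ e) < m -> K < Rpower m e.
Proof.
  intros HK He Hm.
  assert (Eroot : Rpower (Rpower K (/ e)) e = K).
  { rewrite Rpower_mult, Rinv_l by lra; apply Rpower_1, HK. }
  rewrite <- Eroot; apply Rlt_Rpower_l; [lra|].
  split; [apply Rpower_pos | exact Hm].
Qed.

Lemma quadratic_root_rationalize (t : R) : 0 < t ->
  (-1 + sqrt (1 + 4 * t)) / (2 * t) = 2 / (1 + sqrt (1 + 4 * t)).
Proof.
  intros Ht.
  assert (Hsq : sqrt (1 + 4 * t) * sqrt (1 + 4 * t) = 1 + 4 * t)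
    by (apply sqrt_sqrt; lra).
  assert (Hpos : 0 <= sqrt (1 + 4 * t)) by apply sqrt_pos.
  field_simplify_eq; [nra | lra].
Qed.

Lemma one_plus_sqrt_le (t : R) : 1 <= t -> 1 + sqrt (1 + 4 * t) <= (1 + sqrt 5) * t.
Proof.
  intros Ht.
  assert (Hsqrt : sqrt (1 + 4 * t) <= sqrt 5 * t).
  { rewrite <- (sqrt_square t) at 2 by lra; rewrite <- sqrt_mult by nra.
    apply sqrt_le_1; nra. }
  assert (H5 : 0 <= sqrt 5) by apply sqrt_pos.
  nra.
Qed.

Lemma astar_lower_bound (s x : R) : 0 <= s -> 0 <= x ->
  2 / ((1 + sqrt 5) * Rpower (x + 1) s) <= astar s x.
Proof.
  intros Hs Hx; unfold astar.
  set (t := Rpower (x + 1) s).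
  assert (Ht : 1 <= t) by (apply Rpower_ge_1; lra).
  rewrite quadratic_root_rationalize by lra.
  assert (H1 : 0 < 1 + sqrt (1 + 4 * t)) by (pose proof (sqrt_pos (1 + 4 * t)); lra).
  unfold Rdiv; apply Rmult_le_compat_l; [lra|].
  apply Rinv_le_contravar; [exact H1 | apply one_plus_sqrt_le, Ht].
Qed.

Lemma nfun_div_mfun_lt (n1 m1 n2 m2 N M x : R) :
  0 < n1 -> 0 < m1 -> 0 < N -> 0 < x + n2 -> n2 < m2 ->
  nfun n1 n2 N x / mfun m1 m2 M x < n1 / (m1 * Rpower (x + m2) (M - N)).
Proof.
  intros Hn1 Hm1 HN Hxn2 Hn2m2; unfold nfun, mfun.
  set (P := Rpower (x + m2) (M - N)).
  assert (Hsplit : Rpower (x + m2) M = Rpower (x + m2) N * P).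
  { unfold P; rewrite <- Rpower_plus; f_equal; ring. }
  assert (Hbase : Rpower (x + n2) N < Rpower (x + m2) N)
    by (apply Rlt_Rpower_l; lra).
  pose proof (Rpower_pos (x + m2) N).
  assert (HP : 0 < P) by apply Rpower_pos.
  rewrite Hsplit.
  apply (Rmult_lt_reg_r (m1 * (Rpower (x + m2) N * P)));
    [repeat apply Rmult_lt_0_compat; lra|].
  field_simplify; try (split; lra).
  apply Rmult_lt_compat_l; assumption.
Qed.

Lemma mul_Rpower_lt_Rpower_add (x m s e K : R) :
  0 <= x -> 1 <= m -> 0 <= s -> 0 <= e -> 0 < K -> K < Rpower m e ->
  Rpower (x + 1) s * K < Rpower (x + m) (s + e).
Proof.
  intros Hx Hm Hs He HK HKm; rewrite Rpower_plus.
  assert (Hbase : Rpower (x + 1) s <= Rpower (x + m) s) by (apply Rle_Rpower_l; lra).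
  assert (Hgap : Rpower m e <= Rpower (x + m) e) by (apply Rle_Rpower_l; lra).
  pose proof (Rpower_pos (x + 1) s).
  apply Rlt_le_trans with (Rpower (x + 1) s * Rpower (x + m) e).
  - apply Rmult_lt_compat_l; lra.
  - apply Rmult_le_compat_r; [left; apply Rpower_pos | exact Hbase].
Qed.

Theorem lemma4p2 (s m1 n1 N M n2 m2 : R)
  (hs : 1 <= s) (hm1 : 0 < m1) (hn1 : 0 < n1)
  (hN0 : 0 < N) (hN1 : N < 1)
  (hn2 : 1 < n2) (hn2m2 : n2 < m2)
  (hM : M > N + s)
  (hm2 : m2 > Rpower (n1 / (2 * m1) * (1 + sqrt 5)) (/ (M - N - s))) :
  forall x : R, 0 <= x -> astar s x > nfun n1 n2 N x / mfun m1 m2 M x.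
Proof.
  intros x hx.
  set (K := n1 / (2 * m1) * (1 + sqrt 5)).
  set (t := Rpower (x + 1) s).
  assert (h5 : 0 <= sqrt 5) by apply sqrt_pos.
  assert (hK : 0 < K) by (unfold K; apply Rmult_lt_0_compat;
                            [apply Rdiv_lt_0_compat |]; lra).
  assert (ht : 1 <= t) by (apply Rpower_ge_1; lra).
  assert (hP : t * K < Rpower (x + m2) (M - N)).
  { replace (M - N) with (s + (M - N - s)) by ring.
    apply mul_Rpower_lt_Rpower_add; try lra.
    apply lt_Rpower_of_root; [exact hK | lra | exact hm2]. }
  assert (hbound : n1 / (m1 * Rpower (x + m2) (M - N)) < 2 / ((1 + sqrt 5) * t)).
  { replace (2 / ((1 + sqrt 5) * t)) with (n1 / (m1 * (t * K)))
      by (unfold K; field; lra).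
    unfold Rdiv; apply Rmult_lt_compat_l; [lra|].
    apply Rinv_lt_contravar; [|apply Rmult_lt_compat_l; assumption].
    assert (htK : 0 < t * K) by (apply Rmult_lt_0_compat; lra).
    apply Rmult_lt_0_compat; apply Rmult_lt_0_compat; lra. }
  apply Rlt_le_trans with (2 / ((1 + sqrt 5) * t)).
  - eapply Rlt_trans; [apply nfun_div_mfun_lt; lra | exact hbound].
  - apply astar_lower_bound; lra.
Qed.
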